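(* Let $\beta\in\mathbb{Z}[\mathrm{i}]$ with $|\beta|>1$ and let $D\subset\mathbb{Z}[\mathrm{i}]$ be finite. Let $w_1,w_2,w_3\in D^*$ with $w_2$ non-empty, and suppose $[w_1]_\beta\,(1-\beta^{|w_2|})\neq[w_2]_\beta$. For $j\ge0$ put $u_j=[w_1w_2^jw_3]_\beta$, where $w_2^j$ denotes $w_2$ concatenated $j$ times. If there exist integers $k\ge0$ and $\ell\ge1$ such that $u_k,u_{k+\ell},u_{k+2\ell}$ lie on a common line in $\mathbb{C}$, then $\beta$ is a root of an integer, i.e. $\beta^N\in\mathbb{Z}$ for some integer $N\ge1$.
   Context: For a word $w=w_{n-1}\cdots w_0$ over $D$, $[w]_\beta=\sum_{j=0}^{n-1}w_j\beta^j$ ($w_0$ least significant) and $|w|=n$ is its length. *)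

From HB Require Import structures.
From mathcomp Require Import all_boot all_order all_algebra all_field.
Set Implicit Arguments. Unset Strict Implicit. Unset Printing Implicit Defensive.
Import Order.TTheory GRing.Theory Num.Theory.
Local Open Scope ring_scope.

(* Complex numbers are modelled by the algebraic complex numbers algC
   (every Gaussian integer, and every value [w]_beta, lies in algC). *)

Definition gaussInt (x : algC) : bool :=
  ('Re x \in Num.int) && ('Im x \in Num.int).

(* A word w = w_{n-1} ... w_0 is the list [:: w_{n-1}; ...; w_0] (written
   left to right), so concatenation of words is list concatenation (++),
   and w_0 is the LAST entry of the list. *)
Definition wordval (beta : algC) (w : seq algC) : algC :=
  \sum_(j < size w) (nth 0 (rev w) j) * beta ^+ j.

Definition wpow (w : seq algC) (j : nat) : seq algC := flatten (nseq j w).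

Definition collinear3 (a b c : algC) : Prop :=
  exists p d : algC, d != 0 /\
    (exists ta, ta \is Num.real /\ a = p + ta * d) /\
    (exists tb, tb \is Num.real /\ b = p + tb * d) /\
    (exists tc, tc \is Num.real /\ c = p + tc * d).

(* Pumping the middle factor makes [u_j] an affine image of a geometric
   progression: with [q = beta^|w2|], [(q - 1) u_j = A + K q^j] where [K] is
   non-zero exactly by the hypothesis on [w1, w2].  For three collinear points
   [a, b, c] the ratio [(c - a) / (b - a)] is real, and for [u_k, u_(k+l),
   u_(k+2l)] this ratio is [q^l + 1].  So [beta^(|w2| l)] is a real Gaussian
   integer, i.e. a rational integer. *)

From HB Require Import structures.
From mathcomp Require Import all_boot all_order all_algebra all_field.
From mathcomp Require Import ring.
Set Implicit Arguments. Unset Strict Implicit. Unset Printing Implicit Defensive.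
Import Order.TTheory GRing.Theory Num.Theory.
Local Open Scope ring_scope.

Section WordValue.
Variable beta : algC.

Lemma wordval_cat u v :
  wordval beta (u ++ v) = wordval beta u * beta ^+ size v + wordval beta v.
Proof.
rewrite /wordval rev_cat size_cat addnC big_split_ord big_distrl addrC /=.
congr (_ + _); apply: eq_bigr => i _; rewrite nth_cat size_rev ?ltn_ord //.
by rewrite ltnNge leq_addr /= addKn exprD mulrA mulrAC.
Qed.

Lemma size_wpow w j : size (wpow w j) = (j * size w)%N.
Proof. by elim: j => //= j IH; rewrite size_cat -/(wpow w j) IH mulSn. Qed.

Lemma wordval_wpow w j :
  (beta ^+ size w - 1) * wordval beta (wpow w j) =
  wordval beta w * ((beta ^+ size w) ^+ j - 1).
Proof.
elim: j => [|j IH]; first by rewrite /wpow /wordval big_ord0 subrr !mulr0.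
rewrite [wpow w j.+1]/wpow /= -/(wpow w j) wordval_cat mulrDr IH.
by rewrite size_wpow mulnC exprM exprS; ring.
Qed.

Lemma wordval_pump w1 w2 w3 j :
  (beta ^+ size w2 - 1) * wordval beta (w1 ++ wpow w2 j ++ w3) =
  ((beta ^+ size w2 - 1) * wordval beta w3 - beta ^+ size w3 * wordval beta w2)
  + beta ^+ size w3 * (wordval beta w1 * (beta ^+ size w2 - 1) + wordval beta w2)
    * (beta ^+ size w2) ^+ j.
Proof.
have := wordval_wpow w2 j; set q := beta ^+ size w2; set b := beta ^+ size w3.
rewrite !wordval_cat size_cat size_wpow exprD mulnC exprM -/q -/b => Hpow.
transitivity (wordval beta w1 * (q - 1) * q ^+ j * b
  + (q - 1) * wordval beta (wpow w2 j) * b + (q - 1) * wordval beta w3); first ring.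
by rewrite Hpow; ring.
Qed.

End WordValue.

Lemma ratio_affine_geometric (F : fieldType) (u : nat -> F) (M A K q : F) k l :
  M != 0 -> K != 0 -> q != 0 -> q ^+ l != 1 ->
  (forall j, M * u j = A + K * q ^+ j) ->
  (u (k + 2 * l)%N - u k) / (u (k + l)%N - u k) = q ^+ l + 1.
Proof.
move=> M0 K0 q0 ql1 Hu.
have uE j : u j = (A + K * q ^+ j) / M by rewrite -Hu [M * _]mulrC mulfK.
have ql0 : q ^+ l - 1 != 0 by rewrite subr_eq0.
rewrite !uE !exprD expr0 mulr1; field; rewrite M0 /=.
have -> : A + K * (q ^+ k * q ^+ l) - (A + K * q ^+ k) = K * q ^+ k * (q ^+ l - 1)
  by ring.
by rewrite !mulf_neq0 ?expf_neq0.
Qed.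

Lemma collinear3_ratio_real a b c :
  collinear3 a b c -> (c - a) / (b - a) \is Num.real.
Proof.
move=> [p [d [d0 [[ta [ra ->]] [[tb [rb ->]] [tc [rc ->]]]]]]].
have -> : (p + tc * d - (p + ta * d)) / (p + tb * d - (p + ta * d))
          = (tc - ta) / (tb - ta).
  rewrite [p + tc * d]addrC [p + tb * d]addrC !addrKA -!mulrBl.
  by rewrite invfM mulrACA divff // mulr1.
by rewrite rpredM ?rpredV ?rpredB.
Qed.

Lemma exprn_neq1 (R : numDomainType) (x : R) n : 1 < `|x| -> (0 < n)%N -> x ^+ n != 1.
Proof.
move=> x1 n0; apply: contraTneq x1 => xn1.
have : `|x| ^+ n = 1 by rewrite -normrX xn1 normr1.
by move/eqP; rewrite pexpr_eq1 // => /eqP->; rewrite ltxx.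
Qed.

Lemma gaussIntM x y : gaussInt x -> gaussInt y -> gaussInt (x * y).
Proof.
move=> /andP[rx ix] /andP[ry iy].
rewrite [x]Crect [y]Crect mulC_rect /gaussInt Re_rect ?Im_rect;
  by rewrite ?rpredB ?rpredD ?rpredM // Rreal_int ?rpredB ?rpredD ?rpredM.
Qed.

Lemma gaussIntX x n : gaussInt x -> gaussInt (x ^+ n).
Proof.
move=> gx; elim: n => [|n IH]; last by rewrite exprS gaussIntM.
have /Creal_ReP Re1 := real1 algC; have /Creal_ImP Im1 := real1 algC.
by rewrite expr0 /gaussInt Re1 Im1 rpred0 rpred1.
Qed.

Lemma gaussInt_real_int x : gaussInt x -> x \is Num.real -> x \in Num.int.
Proof. by move=> /andP[rx _] /Creal_ReP <-. Qed.

Theorem lemma3p3 (beta : algC) (D : seq algC) (w1 w2 w3 : seq algC) :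
  gaussInt beta -> 1 < `|beta| ->
  all gaussInt D ->
  all (mem D) w1 -> all (mem D) w2 -> all (mem D) w3 ->
  w2 != [::] ->
  wordval beta w1 * (1 - beta ^+ size w2) != wordval beta w2 ->
  (exists k l : nat, (1 <= l)%N /\
     collinear3 (wordval beta (w1 ++ wpow w2 k ++ w3))
                (wordval beta (w1 ++ wpow w2 (k + l) ++ w3))
                (wordval beta (w1 ++ wpow w2 (k + 2 * l) ++ w3))) ->
  exists N : nat, (1 <= N)%N /\ beta ^+ N \in Num.int.
Proof.
move=> gbeta beta1 _ _ _ _ w2_nil hw [k [l [l1 hcol]]].
have n0 : (0 < size w2)%N by rewrite lt0n size_eq0.
have beta0 : beta != 0 by apply: contraTneq beta1 => ->; rewrite normr0 ltr10.
set q := beta ^+ size w2.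
have q1 : q - 1 != 0 by rewrite subr_eq0 exprn_neq1.
have ql1 : q ^+ l != 1 by rewrite -exprM exprn_neq1 ?muln_gt0 ?n0.
have K0 : beta ^+ size w3 * (wordval beta w1 * (q - 1) + wordval beta w2) != 0.
  rewrite mulf_neq0 ?expf_neq0 //; apply: contra hw => /eqP hE.
  rewrite -subr_eq0 (_ : _ - _ = - (wordval beta w1 * (q - 1) + wordval beta w2)).
    by rewrite hE oppr0.
  by rewrite /q; ring.
have /collinear3_ratio_real := hcol.
rewrite (ratio_affine_geometric k q1 K0 (expf_neq0 _ beta0) ql1
                                 (wordval_pump beta w1 w2 w3)).
move=> /realB/(_ (real1 _)); rewrite addrK -exprM => real_pow.
exists (size w2 * l)%N; split; first by rewrite muln_gt0 n0.
exact/gaussInt_real_int/real_pow/gaussIntX.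
Qed.
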